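(* Let $n\geq2$ be finite. If $\mathfrak A\in SA_n$ is completely representable, then so is its minimal completion $\mathrm{Cm}\,\mathrm{At}\mathfrak A$.
   Context: $SA_n=\mathbf{Mod}(\Sigma'_n)$, where $\Sigma'_n$ (signature $\wedge,-,s^i_j,s_{ij}$, $i\neq j<n$) consists of the Boolean axioms, equations saying each $s^i_j,s_{ij}$ is a Boolean endomorphism, and $t_1(x)=t_2(x)$ for all words $t_1,t_2$ with the same associated map in ${}^nn$ (words map to compositions of the transpositions $[i,j]$ and replacements $[i/j]$, where $[i/j]$ sends $i$ to $j$ and fixes the rest). A completely representable algebra is atomic; for atomic $\mathfrak A$ the minimal completion is the complex algebra of its atom structure: universe $\mathcal P(\mathrm{At}\mathfrak A)$ with Boolean set operations and, for each unary operator $f$, $f(Y)=\{a\in\mathrm{At}\mathfrak A:\exists b\in Y,\ a\leq f(b)\}$; $\mathfrak A$ embeds in it via $x\mapsto\{a\in\mathrm{At}\mathfrak A:a\le x\}$. $\mathfrak B$ is completely representable if there is an injective homomorphism $g:\mathfrak B\to\wp(D)$ with $D$ dipermutable (closed under $s\mapsto s\circ[i/j]$ and $s\mapsto s\circ[i,j]$) and $g(\prod Y)=\bigcap g[Y]$ whenever $\prod Y$ exists; $\wp(D)$ carries $\cap$, complement relative to $D$, $S^i_j(X)=\{q\in D:q\circ[i/j]\in X\}$, $S_{ij}(X)=\{q\in D:q\circ[i,j]\in X\}$. *)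

From mathcomp Require Import all_boot.
Set Implicit Arguments. Unset Strict Implicit. Unset Printing Implicit Defensive.

(* sub i j  is s^i_j (associated map [i/j]),  swp i j  is s_ij (map [i,j]).
   The operations are only meaningful for i <> j; all axioms and all
   homomorphism conditions below only mention i <> j. *)
Record sa_sig (n : nat) := SaSig {
  carrier :> Type;
  meet : carrier -> carrier -> carrier;
  compl : carrier -> carrier;
  sub : 'I_n -> 'I_n -> carrier -> carrier;
  swp : 'I_n -> 'I_n -> carrier -> carrier }.
Arguments meet {n} s _ _.
Arguments compl {n} s _.
Arguments sub {n} s _ _ _.
Arguments swp {n} s _ _ _.

Section Sig.
Variables (n : nat) (A : sa_sig n).

Definition join (x y : A) : A := compl A (meet A (compl A x) (compl A y)).
Definition le (x y : A) : Prop := meet A x y = x.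

Definition boolean_axioms : Prop :=
  (forall x y : A, meet A x y = meet A y x) /\
  (forall x y z : A, meet A x (meet A y z) = meet A (meet A x y) z) /\
  (forall x y : A, join x y = join y x) /\
  (forall x y z : A, join x (join y z) = join (join x y) z) /\
  (forall x y : A, meet A x (join x y) = x) /\
  (forall x y : A, join x (meet A x y) = x) /\
  (forall x y z : A, meet A x (join y z) = join (meet A x y) (meet A x z)) /\
  (forall x y : A, meet A x (compl A x) = meet A y (compl A y)) /\
  (forall x y : A, join x (compl A x) = join y (compl A y)).

Definition bool_endo (f : A -> A) : Prop :=
  (forall x y, f (meet A x y) = meet A (f x) (f y)) /\
  (forall x, f (compl A x) = compl A (f x)).
End Sig.

Definition repl n (i j : 'I_n) (k : 'I_n) : 'I_n := if k == i then j else k.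
Definition transp n (i j : 'I_n) (k : 'I_n) : 'I_n :=
  if k == i then j else if k == j then i else k.

(* generators: (true, i, j) is s_ij, (false, i, j) is s^i_j *)
Definition gen n := (bool * 'I_n * 'I_n)%type.
Definition valid_gen n (g : gen n) : bool := g.1.2 != g.2.
Definition gen_map n (g : gen n) : 'I_n -> 'I_n :=
  if g.1.1 then transp g.1.2 g.2 else repl g.1.2 g.2.
Definition gen_op n (A : sa_sig n) (g : gen n) : A -> A :=
  if g.1.1 then swp A g.1.2 g.2 else sub A g.1.2 g.2.

Arguments gen_op {n} A g _.

(* word [:: g1; ...; gk] : x |-> g1 (... (gk x)), with map g1 o ... o gk *)
Definition word_map n (w : seq (gen n)) : 'I_n -> 'I_n :=
  foldr (fun g m => gen_map g \o m) id w.
Definition apply_word n (A : sa_sig n) (w : seq (gen n)) (x : A) : A :=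
  foldr (fun g y => gen_op A g y) x w.
Arguments apply_word {n} A w x.

Definition SA_axioms n (A : sa_sig n) : Prop :=
  boolean_axioms A /\
  (forall i j : 'I_n, i != j -> bool_endo (sub A i j)) /\
  (forall i j : 'I_n, i != j -> bool_endo (swp A i j)) /\
  (forall w1 w2 : seq (gen n), all (@valid_gen n) w1 -> all (@valid_gen n) w2 ->
     (forall k, word_map w1 k = word_map w2 k) ->
     forall x : A, apply_word A w1 x = apply_word A w2 x).

Definition dipermutable n (U : Type) (D : ('I_n -> U) -> Prop) : Prop :=
  forall s, D s -> forall i j : 'I_n, i != j ->
    D (s \o repl i j) /\ D (s \o transp i j).

Definition is_glb n (B : sa_sig n) (Y : B -> Prop) (p : B) : Prop :=
  (forall y, Y y -> le p y) /\ (forall z, (forall y, Y y -> le z y) -> le z p).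

(* g : B -> wp(D) is an injective homomorphism into the full set algebra on D
   (sets compared extensionally), preserving all existing infima. *)
Definition completely_representable n (B : sa_sig n) : Prop :=
  exists (U : Type) (D : ('I_n -> U) -> Prop) (g : B -> ('I_n -> U) -> Prop),
    dipermutable D /\
    (forall b q, g b q -> D q) /\
    (forall b c, (forall q, g b q <-> g c q) -> b = c) /\
    (forall b c q, g (meet B b c) q <-> g b q /\ g c q) /\
    (forall b q, g (compl B b) q <-> D q /\ ~ g b q) /\
    (forall i j : 'I_n, i != j -> forall b q,
        g (sub B i j b) q <-> D q /\ g b (q \o repl i j)) /\
    (forall i j : 'I_n, i != j -> forall b q,
        g (swp B i j b) q <-> D q /\ g b (q \o transp i j)) /\
    (forall (Y : B -> Prop) (p : B), is_glb Y p ->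
        forall q, g p q <-> D q /\ (forall y, Y y -> g y q)).

Definition zero n (A : sa_sig n) (x : A) : A := meet A x (compl A x).
Definition is_atom n (A : sa_sig n) (a : A) : Prop :=
  (forall x : A, a <> zero x) /\
  (forall x : A, le x a -> x = zero a \/ x = a).

Definition At n (A : sa_sig n) := {a : A | is_atom a}.

Definition cm_op n (A : sa_sig n) (f : A -> A) (Y : At A -> Prop) : At A -> Prop :=
  fun a => exists b : At A, Y b /\ le (proj1_sig a) (f (proj1_sig b)).

Definition Cm_At n (A : sa_sig n) : sa_sig n :=
  @SaSig n (At A -> Prop)
    (fun Y Z a => Y a /\ Z a)
    (fun Y a => ~ Y a)
    (fun i j => cm_op (sub A i j))
    (fun i j => cm_op (swp A i j)).

From mathcomp Require Import all_boot.
From Stdlib Require Import Classical FunctionalExtensionality PropExtensionality ProofIrrelevance.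

Set Implicit Arguments.
Unset Strict Implicit.

(* Let f : A -> P(D) be a complete representation of A.  The argument only uses
   that f is an injective Boolean homomorphism preserving all existing infima.

   1. In Cm At A the order is inclusion, so existing infima are intersections
      (section ComplexAlgebraOrder).
   2. Every point q of D lies in the image of some atom of A: otherwise the
      elements whose image contains q would have infimum 0, and since f
      preserves this infimum, q would lie in f 0 = {}.  An atom whose image
      contains q lies below every element whose image contains q, so distinct
      atoms have disjoint images.
   3. Let D' be the union of the images of the atoms (equal to D unless A is
      empty).  Sending a set Y of atoms to the union of the images of its
      members gives a map Cm At A -> P(D') which, by 1 and 2, is an injective
      Boolean homomorphism commuting with the substitutions and transpositions
      and turning infima into intersections (section CompleteRepresentation). *)

Section ComplexAlgebraOrder.
Variables (n : nat) (A : sa_sig n).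

Lemma Cm_le (Y Z : Cm_At A) : le Y Z <-> (forall a, Y a -> Z a).
Proof.
split=> [YZ a | YZ].
- by rewrite -YZ => -[].
- apply: functional_extensionality => a; apply: propositional_extensionality.
  by split=> [[] // | Ya]; split=> //; apply: YZ.
Qed.

Lemma Cm_glb (Y : Cm_At A -> Prop) (p : Cm_At A) :
  is_glb Y p -> forall a, p a <-> (forall y, Y y -> y a).
Proof.
case=> lower greatest a; split=> [pa y Yy | in_all].
- exact: (proj1 (Cm_le _ _) (lower y Yy) a pa).
- pose z : Cm_At A := fun b => forall y, Y y -> y b.
  have /Cm_le: le z p by apply: greatest => y Yy; apply/Cm_le => b; apply.
  by apply.
Qed.

End ComplexAlgebraOrder.

Section CompleteRepresentation.
Variables (n : nat) (A : sa_sig n) (U : Type) (D : ('I_n -> U) -> Prop).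
Variable f : A -> ('I_n -> U) -> Prop.
Hypothesis f_in_D : forall b q, f b q -> D q.
Hypothesis f_inj : forall b c, (forall q, f b q <-> f c q) -> b = c.
Hypothesis f_meet : forall b c q, f (meet A b c) q <-> f b q /\ f c q.
Hypothesis f_compl : forall b q, f (compl A b) q <-> D q /\ ~ f b q.
Hypothesis f_glb : forall (Y : A -> Prop) (p : A), is_glb Y p ->
  forall q, f p q <-> D q /\ (forall y, Y y -> f y q).

Lemma rep_zero (x : A) q : ~ f (zero x) q.
Proof. by move/f_meet=> [fx /f_compl []]. Qed.

Lemma rep_le (x y : A) q : le x y -> f x q -> f y q.
Proof. by move=> xy; rewrite -xy => /f_meet []. Qed.

Lemma le_of_rep (x y : A) : (forall q, f x q -> f y q) -> le x y.
Proof.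
move=> xy; apply: f_inj => q; split=> [/f_meet [] // | fx].
by apply/f_meet; split=> //; apply: xy.
Qed.

Lemma rep_empty_zero (x y : A) : (forall q, ~ f x q) -> x = zero y.
Proof.
move=> empty; apply: f_inj => q; split=> [/empty [] | /rep_zero []].
Qed.

Lemma rep_le_compl_empty (z : A) q : le z (compl A z) -> ~ f z q.
Proof. by move=> zz' fz; case/f_compl: (rep_le zz' fz). Qed.

Lemma atom_rep_inhabited (a : A) : is_atom a -> exists q, f a q.
Proof.
case=> nonzero _; apply: NNPP => no_point; apply: (nonzero a).
by apply: rep_empty_zero => q fa; apply: no_point; exists q.
Qed.

Lemma atom_rep_le (a s : A) q : is_atom a -> f a q -> f s q -> le a s.
Proof.
case=> _ minimal fa fs.
have: le (meet A a s) a by apply: le_of_rep => q' /f_meet [].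
case/minimal=> [as_zero | //].
by move/f_meet: (conj fa fs); rewrite as_zero => /rep_zero.
Qed.

Lemma atom_rep_unique (a b : A) q :
  is_atom a -> is_atom b -> f a q -> f b q -> a = b.
Proof.
move=> atom_a atom_b fa fb; apply: f_inj => q'.
by split; apply: rep_le;
  [exact: (atom_rep_le atom_a fa fb) | exact: (atom_rep_le atom_b fb fa)].
Qed.

(* A lower bound of the elements containing q which itself contains q is an
   atom: it is nonzero, and any x below it either contains q (then equals it)
   or lies below its complement (then is zero). *)
Lemma lower_bound_point_atom (z : A) q :
  D q -> (forall y, f y q -> le z y) -> f z q -> is_atom z.
Proof.
move=> Dq lower fz; split=> [x z0 | x xz].
- by apply: (rep_zero (x := x) (q := q)); rewrite -z0.
- case: (classic (f x q)) => [fx | nfx].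
  + right; apply: f_inj => q'; split; apply: rep_le => //; exact: lower.
  + left; apply: rep_empty_zero => q' fx.
    have zx': le z (compl A x) by apply: lower; apply/f_compl.
    by case/f_compl: (rep_le zx' (rep_le xz fx)).
Qed.

(* Complete representability forces every point q of D into an atom: otherwise
   zero (named through any element x) would be the infimum of the elements
   containing q, and preserving that infimum would put q into the image of 0. *)
Lemma rep_point_atom (x : A) q : D q -> exists a, is_atom a /\ f a q.
Proof.
move=> Dq; apply: NNPP => no_atom.
have glb_zero: is_glb (fun c => f c q) (zero x).
  split=> [y _ | z lower]; apply: le_of_rep => q'; first by move/rep_zero.
  move=> fz; exfalso; case: (classic (f z q)) => [fzq | nfzq].
  - by apply: no_atom; exists z; split=> //; exact: (lower_bound_point_atom Dq lower fzq).
  - have zz': le z (compl A z) by apply: lower; apply/f_compl.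
    exact: (rep_le_compl_empty zz' fz).
by apply: (rep_zero (x := x) (q := q)); apply/(f_glb glb_zero).
Qed.

Definition atomic_part (q : 'I_n -> U) : Prop := exists a : At A, f (sval a) q.

Definition cm_rep (Y : Cm_At A) (q : 'I_n -> U) : Prop :=
  exists a : At A, Y a /\ f (sval a) q.

Lemma At_rep_unique (a b : At A) q : f (sval a) q -> f (sval b) q -> a = b.
Proof.
case: a => a atom_a; case: b => b atom_b /= fa fb.
have a_eq_b := atom_rep_unique atom_a atom_b fa fb; subst b.
by rewrite (proof_irrelevance _ atom_a atom_b).
Qed.

(* D' inherits dipermutability from D: a moved point of D' still lies in D,
   hence in some atom. *)
Lemma atomic_part_dipermutable : dipermutable D -> dipermutable atomic_part.
Proof.
move=> D_diperm s [a fa] i j ij.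
have [Ds_repl Ds_transp] := D_diperm s (f_in_D fa) i j ij.
by split; [case: (rep_point_atom (sval a) Ds_repl)
          | case: (rep_point_atom (sval a) Ds_transp)];
  move=> b [atom_b fb]; exists (exist _ b atom_b).
Qed.

(* Injectivity: every atom has a point, and that point determines the atom. *)
Lemma cm_rep_inj (Y Z : Cm_At A) : (forall q, cm_rep Y q <-> cm_rep Z q) -> Y = Z.
Proof.
move=> YZ; apply: functional_extensionality => a.
have [q fa] := atom_rep_inhabited (proj2_sig a).
apply: propositional_extensionality; split=> [Ya | Za].
- by case: (proj1 (YZ q) (ex_intro _ a (conj Ya fa))) => b [Zb fb];
    rewrite (At_rep_unique fa fb).
- by case: (proj2 (YZ q) (ex_intro _ a (conj Za fa))) => b [Yb fb];
    rewrite (At_rep_unique fa fb).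
Qed.

(* Meets and complements are preserved: intersection is immediate, and the
   complement relative to D' works because each point lies in one atom only. *)
Lemma cm_rep_meet (Y Z : Cm_At A) q :
  cm_rep (meet (Cm_At A) Y Z) q <-> cm_rep Y q /\ cm_rep Z q.
Proof.
split=> [[a [[Ya Za] fa]] | [[a [Ya fa]] [b [Zb fb]]]].
- by split; exists a.
- by rewrite -(At_rep_unique fa fb) in Zb; exists a.
Qed.

Lemma cm_rep_compl (Y : Cm_At A) q :
  cm_rep (compl (Cm_At A) Y) q <-> atomic_part q /\ ~ cm_rep Y q.
Proof.
split=> [[a [nYa fa]] | [[a fa] nY]].
- split; first by exists a.
  by case=> b [Yb fb]; apply: nYa; rewrite (At_rep_unique fa fb).
- by exists a; split=> // Ya; apply: nY; exists a.
Qed.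

Lemma cm_rep_op (h : A -> A) (m : 'I_n -> 'I_n) :
  (forall b q, f (h b) q <-> D q /\ f b (q \o m)) ->
  forall (Y : Cm_At A) q, cm_rep (cm_op h Y) q <-> atomic_part q /\ cm_rep Y (q \o m).
Proof.
move=> f_h Y q; split=> [[a [[b [Yb ahb]] fa]] | [[a fa] [b [Yb fb]]]].
- have /f_h [_ fb] := rep_le ahb fa.
  by split; [exists a | exists b].
- exists a; split=> //; exists b; split=> //.
  by apply: (atom_rep_le (proj2_sig a) fa); apply/f_h; split=> //; exact: f_in_D fa.
Qed.

(* Infima of Cm At A are intersections, and cm_rep turns them into
   intersections of images because each point lies in a single atom. *)
Lemma cm_rep_glb (Y : Cm_At A -> Prop) (p : Cm_At A) : is_glb Y p ->
  forall q, cm_rep p q <-> atomic_part q /\ (forall y, Y y -> cm_rep y q).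
Proof.
move=> glb_p q; split=> [[a [pa fa]] | [[a fa] in_all]].
- split; first by exists a.
  by move=> y Yy; exists a; split=> //; apply: (proj1 (Cm_glb glb_p a) pa).
- exists a; split=> //; apply/(Cm_glb glb_p) => y Yy.
  by case: (in_all y Yy) => b [yb fb]; rewrite (At_rep_unique fa fb).
Qed.

End CompleteRepresentation.

Theorem theorem4p20 (n : nat) (hn : 2 <= n) (A : sa_sig n) :
  SA_axioms A -> completely_representable A -> completely_representable (Cm_At A).
Proof.
move=> _ [U [D [f [D_diperm [f_in_D [f_inj [f_meet [f_compl [f_sub [f_swp f_glb]]]]]]]]]].
exists U, (atomic_part f), (cm_rep f).
split; first exact: (atomic_part_dipermutable f_in_D f_inj f_meet f_compl f_glb D_diperm).
split; first by move=> Y q [a [_ fa]]; exists a.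
split; first exact: (cm_rep_inj f_inj f_meet f_compl).
split; first exact: (cm_rep_meet f_inj f_meet f_compl).
split; first exact: (cm_rep_compl f_inj f_meet f_compl).
split; first exact: (fun i j ij => cm_rep_op f_in_D f_inj f_meet f_compl (f_sub i j ij)).
split; first exact: (fun i j ij => cm_rep_op f_in_D f_inj f_meet f_compl (f_swp i j ij)).
exact: (cm_rep_glb f_inj f_meet f_compl).
Qed.
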